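(* Let $n\ge 1$ be an integer and $K=L=T=n^2$. For $r\in\{1,\ldots,n^2\}$ let $N(r)$ be the number of distinct integers in $\operatorname{Set}(\alpha)+\operatorname{Set}(\beta)$ for the $\mathsf{GASP}_r$ vectors $(\alpha,\beta)$ with these parameters. Then the minimum of $N(r)$ over $r\in\{1,\ldots,n^2\}$ is attained at $r=n$, and $N(n)=3$ if $n=1$, and $N(n)=n^4+2n^3+2n^2-n-2$ if $n\ge 2$.
   Context: For positive integers $K,L,T,r$ with $L\le K$ and $1\le r\le\min\{K,T\}$, the code $\mathsf{GASP}_r$ is given by the integer vectors $\alpha=(\alpha_{\mathrm p}\mid\alpha_{\mathrm s})$ and $\beta=(\beta_{\mathrm p}\mid\beta_{\mathrm s})$ (concatenations), where $\alpha_{\mathrm p}=(0,1,\ldots,K-1)$; $\alpha_{\mathrm s}$ is the vector of the $T$ smallest elements of $\{KL+j+Kt : 0\le j\le r-1,\ t\in\mathbb{Z}_{\ge 0}\}$ in increasing order; $\beta_{\mathrm p}=(0,K,\ldots,K(L-1))$; $\beta_{\mathrm s}=(KL,KL+1,\ldots,KL+T-1)$. $\operatorname{Set}(v)$ denotes the set of entries of $v$, and $A+B=\{a+b:a\in A,b\in B\}$. *)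

From mathcomp Require Import all_boot.
Set Implicit Arguments. Unset Strict Implicit. Unset Printing Implicit Defensive.

(* Membership in the secret-exponent set
   S = { K*L + j + K*t : 0 <= j <= r-1, t >= 0 }  (for r <= K the (j,t) are
   recovered as j = (x - K*L) mod K, t = (x - K*L) div K). *)
Definition gasp_S (K L r x : nat) : bool :=
  (K * L <= x) && ((x - K * L) %% K < r).

(* All elements
   K*L + j + K*t with j < r, t < T lie below K*L + K*T, and there are r*T >= T
   of them, so filtering the increasing range [0, K*L + K*T) and keeping the
   first T entries yields exactly the T smallest elements of S. *)
Definition alpha_s (K L T r : nat) : seq nat :=
  take T [seq x <- iota 0 (K * L + K * T) | gasp_S K L r x].

Definition alpha_p (K : nat) : seq nat := iota 0 K.
Definition beta_p (K L : nat) : seq nat := [seq K * i | i <- iota 0 L].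
Definition beta_s (K L T : nat) : seq nat := iota (K * L) T.

Definition gasp_alpha (K L T r : nat) : seq nat := alpha_p K ++ alpha_s K L T r.
Definition gasp_beta (K L T : nat) : seq nat := beta_p K L ++ beta_s K L T.

Definition sumset_size (a b : seq nat) : nat :=
  size (undup [seq x + y | x <- a, y <- b]).

Definition N_gasp (n r : nat) : nat :=
  sumset_size (gasp_alpha (n ^ 2) (n ^ 2) (n ^ 2) r) (gasp_beta (n ^ 2) (n ^ 2) (n ^ 2)).

From Stdlib Require Import ZArith.
From mathcomp Require Import all_boot zify.

Set Implicit Arguments.
Unset Strict Implicit.
Unset Printing Implicit Defensive.

(* The i-th smallest element of S is S_nth i = KL + (i mod r) + K (i div r),
   which increases with i by steps of at most K.  For K = L = T = m the sumset
   is the union of [0, m^2 + 2m - 1) (alpha_p + beta), of the x in [m^2, 2m^2)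
   with x mod m < r (alpha_s + beta_p), and of [2m^2, m^2 + S_nth (m-1) + m)
   (alpha_s + beta_s, a union of overlapping intervals of length m); counting
   gives N(r) = S_nth (m-1) + 3m - 1 + [r = m] + (m-2) r when m >= 2.  For
   m = n^2, writing m - 1 = q r + s, the cost c(r) = (m-2) r + s + m q is
   minimal at r = n by the identity
     r (c(r) - c(n)) = (n^2 (r-n)^2 - r (r-n)) + (r-1-s) (n^2-r),
   both of whose summands are nonnegative. *)

Section SecretExponents.

Variables K L r : nat.
Hypotheses (r_gt0 : 0 < r) (r_leK : r <= K).

Definition S_nth (i : nat) : nat := K * L + i %% r + K * (i %/ r).

Lemma S_nthE t j : j < r -> S_nth (t * r + j) = K * L + j + K * t.
Proof.
by move=> lt_jr; rewrite /S_nth modnMDl divnMDl // modn_small // divn_small // addn0.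
Qed.

Lemma S_nth0 : S_nth 0 = K * L.
Proof. by rewrite /S_nth mod0n div0n muln0 !addn0. Qed.

Lemma S_nth_gasp_S i : gasp_S K L r (S_nth i).
Proof.
rewrite (divn_eq i r) S_nthE ?ltn_pmod // /gasp_S.
rewrite -addnA leq_addr addKn addnC mulnC modnMDl modn_small ?ltn_pmod //.
exact: leq_trans (ltn_pmod _ _) r_leK.
Qed.

Lemma S_nth_onto x : gasp_S K L r x -> exists i, x = S_nth i.
Proof.
case/andP=> le_KL_x lt_mod; exists ((x - K * L) %/ K * r + (x - K * L) %% K).
rewrite S_nthE //; have := divn_eq (x - K * L) K; lia.
Qed.

Lemma modn_S_nth i : S_nth i %% K = i %% r.
Proof.
rewrite /S_nth addnAC -mulnDr mulnC modnMDl modn_small //.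
exact: leq_trans (ltn_pmod _ _) r_leK.
Qed.

Lemma S_nth_step i : S_nth i < S_nth i.+1 <= S_nth i + K.
Proof.
rewrite (divn_eq i r) -addnS; set t := i %/ r; set j := i %% r.
have lt_jr : j < r by exact: ltn_pmod.
rewrite S_nthE //; case: (ltnP j.+1 r) => [lt_j1r | le_rj1].
  by rewrite S_nthE //; lia.
have -> : t * r + j.+1 = t.+1 * r + 0 by lia.
by rewrite S_nthE //; lia.
Qed.

Lemma S_nth_leq_mono : {mono S_nth : i j / i <= j}.
Proof.
apply/leq_mono/(homo_ltn ltn_trans) => i.
by case/andP: (S_nth_step i).
Qed.

Lemma S_nth_ltn_mono : {mono S_nth : i j / i < j}.
Proof. exact/leqW_mono/S_nth_leq_mono. Qed.

Lemma filter_gasp_S k :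
  [seq x <- iota 0 (S_nth k) | gasp_S K L r x] = map S_nth (iota 0 k).
Proof.
apply: (irr_sorted_eq ltn_trans ltnn).
- exact/sorted_filter/iota_ltn_sorted/ltn_trans.
- by apply: homo_sorted (iota_ltn_sorted 0 k) => i j; rewrite S_nth_ltn_mono.
move=> x; rewrite mem_filter mem_iota /=; apply/andP/mapP.
  case=> /S_nth_onto [i ->]; rewrite S_nth_ltn_mono => lt_ik.
  by exists i; rewrite // mem_iota.
by case=> i; rewrite mem_iota => lt_ik ->; rewrite S_nth_gasp_S S_nth_ltn_mono.
Qed.

Lemma alpha_sE T : alpha_s K L T r = map S_nth (iota 0 T).
Proof.
have le_ST : S_nth T <= K * L + K * T.
  rewrite /S_nth -addnA leq_add2l [in K * T](divn_eq T r) mulnDr mulnA addnC.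
  apply: leq_add; first exact: leq_pmulr.
  by apply: leq_pmull; apply: leq_trans r_gt0 r_leK.
rewrite /alpha_s -(subnKC le_ST) iotaD filter_cat filter_gasp_S.
by rewrite take_size_cat // size_map size_iota.
Qed.

Lemma S_nth_cover k y : S_nth 0 <= y < S_nth k + K ->
  exists2 i, i <= k & S_nth i <= y < S_nth i + K.
Proof.
elim: k => [|k IHk] y_range; first by exists 0.
case: (leqP (S_nth k.+1) y) => [le_Sy | lt_yS]; first by exists k.+1; lia.
have [|i le_ik i_range] := IHk; first by have := S_nth_step k; lia.
by exists i; first exact: leqW.
Qed.

End SecretExponents.

Lemma size_undup_iota (s : seq nat) B : {in s, forall x, x < B} ->
  size (undup s) = count (mem s) (iota 0 B).
Proof.
move=> s_ltB; rewrite -size_filter; apply/perm_size/uniq_perm.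
- exact: undup_uniq.
- exact/filter_uniq/iota_uniq.
move=> x; rewrite mem_undup mem_filter mem_iota add0n /=.
by case sx: (x \in s); rewrite // s_ltB.
Qed.

Lemma count_iota_all (p : pred nat) a n : (forall x, a <= x < a + n -> p x) ->
  count p (iota a n) = n.
Proof.
move=> p_range; rewrite -[RHS](size_iota a n); apply/eqP; rewrite -all_count.
by apply/allP=> x; rewrite mem_iota; apply: p_range.
Qed.

Lemma count_modn_iota m r c k : r <= m ->
  count (fun x => x %% m < r) (iota (c * m) (k * m)) = k * r.
Proof.
move=> r_lem; elim: k => [|k IHk]; first by rewrite !mul0n.
rewrite !mulSnr iotaD count_cat IHk -mulnDl; congr (_ + _).
rewrite -[_ * m]addn0 iotaDl count_map -size_filter -[RHS](size_iota 0 r).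
rewrite -(filter_iota_ltn 0 r_lem); congr size; apply: eq_in_filter => x.
by rewrite mem_iota /= modnMDl => lt_xm; rewrite modn_small.
Qed.

Section GaspSumset.

Variables m r : nat.
Hypotheses (m_gt1 : 1 < m) (r_gt0 : 0 < r) (r_lem : r <= m).

Local Notation g := (S_nth m m r).
Local Notation sumset := [seq a + b | a <- gasp_alpha m m m r, b <- gasp_beta m m m].

Definition in_gasp_sumset x : bool :=
  [|| x < m * m + 2 * m - 1, (x < 2 * (m * m)) && (x %% m < r)
    | 2 * (m * m) <= x < m * m + g m.-1 + m].

Lemma S_nth_range i : i < m -> m * m <= g i <= g m.-1.
Proof.
by move=> lt_im; rewrite -{1}(S_nth0 m m r) !S_nth_leq_mono //; lia.
Qed.

Lemma mem_gasp_alpha a :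
  (a \in gasp_alpha m m m r) = (a < m) || (a \in map g (iota 0 m)).
Proof. by rewrite /gasp_alpha alpha_sE // mem_cat mem_iota. Qed.

Lemma mem_gasp_beta b :
  (b \in gasp_beta m m m) =
  (b \in map (muln m) (iota 0 m)) || (m * m <= b < m * m + m).
Proof. by rewrite /gasp_beta mem_cat mem_iota. Qed.

Lemma in_gasp_sumset_add a b :
  a \in gasp_alpha m m m r -> b \in gasp_beta m m m -> in_gasp_sumset (a + b).
Proof.
rewrite mem_gasp_alpha mem_gasp_beta /in_gasp_sumset.
case/orP=> [lt_am | /mapP[i]]; last rewrite mem_iota add0n /= => lt_im ->.
  by case/orP=> [/mapP[k] | ]; [rewrite mem_iota add0n /= => lt_km ->; nia | lia].
have [le_mm_gi le_gi_top] := andP (S_nth_range lt_im).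
case/orP=> [/mapP[k] | ]; last by lia.
rewrite mem_iota add0n /= => lt_km ->.
have -> : (g i + m * k) %% m < r.
  by rewrite mulnC addnC modnMDl modn_S_nth // ltn_pmod.
nia.
Qed.

Lemma sumset_in_gasp x : in_gasp_sumset x -> x \in sumset.
Proof.
have m_gt0 : 0 < m by exact: ltnW.
have sum_mem a b : a \in gasp_alpha m m m r -> b \in gasp_beta m m m ->
    x = a + b -> x \in sumset.
  by move=> Aa Bb ->; apply: allpairs_f.
have [lt_x_2m _ | le_2m_x] := ltnP x (m * m + 2 * m - 1).
  have [lt_x_mm | le_mm_x] := ltnP x (m * m).
    apply: (sum_mem (x %% m) (m * (x %/ m))); last by rewrite addnC mulnC -divn_eq.
      by rewrite mem_gasp_alpha ltn_pmod.
    by rewrite mem_gasp_beta map_f // mem_iota ltn_divLR.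
  have [lt_x_mmm | le_mmm_x] := ltnP x (m * m + m).
    apply: (sum_mem (x - m * m) (m * m)); last by lia.
      by rewrite mem_gasp_alpha; lia.
    by rewrite mem_gasp_beta; lia.
  apply: (sum_mem m.-1 (x - m.-1)); last by lia.
    by rewrite mem_gasp_alpha; lia.
  by rewrite mem_gasp_beta; lia.
rewrite /in_gasp_sumset ltnNge le_2m_x /=.
case/orP=> [/andP[lt_x_2mm lt_mod] | /andP[le_2mm_x lt_x_top]].
  have le_mm_x : m * m <= x by lia.
  have mod_x : (x - m * m) %% m = x %% m by rewrite -{2}(subnKC le_mm_x) modnMDl.
  have g_mod : g (x %% m) = m * m + x %% m.
    by rewrite -[x %% m]add0n -[0]/(0 * r) S_nthE // muln0 addn0.
  apply: (sum_mem (g (x %% m)) (m * ((x - m * m) %/ m))).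
  - by rewrite mem_gasp_alpha map_f ?orbT // mem_iota ltn_pmod.
  - by rewrite mem_gasp_beta map_f // mem_iota ltn_divLR //; lia.
  - by rewrite g_mod -mod_x; have := divn_eq (x - m * m) m; lia.
have [i le_i_top] : exists2 i, i <= m.-1 & g i <= x - m * m < g i + m.
  by apply: S_nth_cover; rewrite // S_nth0; lia.
move=> range_x; apply: (sum_mem (g i) (x - g i)); last by lia.
- by rewrite mem_gasp_alpha map_f ?orbT // mem_iota; lia.
- by rewrite mem_gasp_beta; lia.
Qed.

Lemma mem_gasp_sumset x : (x \in sumset) = in_gasp_sumset x.
Proof.
apply/idP/idP; last exact: sumset_in_gasp.
by case/allpairsP=> [[a b] /= [Aa Bb ->]]; apply: in_gasp_sumset_add.
Qed.

Lemma size_gasp_sumset :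
  sumset_size (gasp_alpha m m m r) (gasp_beta m m m) =
  g m.-1 + 3 * m - 1 + (r == m) + (m - 2) * r.
Proof.
have /andP[le_mm_top _] : m * m <= g m.-1 <= g m.-1 by apply: S_nth_range; lia.
rewrite /sumset_size (@size_undup_iota _ (m * m + g m.-1 + m)); last first.
  by move=> x; rewrite mem_gasp_sumset /in_gasp_sumset; nia.
rewrite (eq_count mem_gasp_sumset).
set A := m * m + 2 * m - 1; set B := (m - 2) * m.
have -> : m * m + g m.-1 + m = A + (1 + (B + (g m.-1 + m - m * m))) by nia.
rewrite (iotaD 0 A) (iotaD (0 + A) 1) (iotaD (0 + A + 1) B) !count_cat add0n.
have -> : A + 1 = (m + 2) * m by nia.
rewrite count_iota_all; last by move=> x; rewrite /in_gasp_sumset; lia.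
have -> : count in_gasp_sumset (iota A 1) = (r == m).
  have A_mod : A %% m = m.-1.
    have -> : A = (m + 1) * m + m.-1 by nia.
    by rewrite modnMDl modn_small //; lia.
  rewrite /= addn0 /in_gasp_sumset A_mod.
  congr nat_of_bool; apply/idP/idP; nia.
have -> : count in_gasp_sumset (iota ((m + 2) * m) B) = (m - 2) * r.
  rewrite -(count_modn_iota (m + 2) (m - 2) r_lem); apply: eq_in_count => /= x.
  rewrite mem_iota /in_gasp_sumset => x_range.
  have [lt_x_2mm le_A_x] : x < 2 * (m * m) /\ A <= x by nia.
  by rewrite ltnNge le_A_x lt_x_2mm (leqNgt (2 * _)) lt_x_2mm /= orbF.
rewrite count_iota_all; last by move=> x; rewrite /B /in_gasp_sumset; nia.
rewrite /A /B; nia.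
Qed.

End GaspSumset.

Open Scope Z_scope.

Lemma gasp_cost_minZ (n r q s : Z) : 2 <= n -> 1 <= r <= n ^ 2 ->
  n ^ 2 - 1 = q * r + s -> 0 <= s < r ->
  n * (n ^ 2 - 2) + (n - 1) + n ^ 2 * (n - 1) <= r * (n ^ 2 - 2) + s + n ^ 2 * q.
Proof.
move=> n_ge2 r_range div_n2 s_range.
have key : r * (r * (n ^ 2 - 2) + s + n ^ 2 * q)
    - r * (n * (n ^ 2 - 2) + (n - 1) + n ^ 2 * (n - 1))
    = (n ^ 2 * (r - n) ^ 2 - r * (r - n)) + (r - 1 - s) * (n ^ 2 - r).
  have q_r : r * (n ^ 2 * q) = n ^ 2 * (n ^ 2 - 1 - s) by rewrite div_n2; ring.
  by rewrite Z.mul_add_distr_l q_r; ring.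
have sq_ge0 : 0 <= n ^ 2 * (r - n) ^ 2.
  by apply: Z.mul_nonneg_nonneg; rewrite Z.pow_2_r; [nia | exact: Z.square_nonneg].
have first_ge0 : r * (r - n) <= n ^ 2 * (r - n) ^ 2.
  have [le_rn | lt_nr] := Z.le_gt_cases r n; first nia.
  have : r <= n ^ 2 * (r - n) by nia.
  nia.
have : 0 <= (r - 1 - s) * (n ^ 2 - r) by apply: Z.mul_nonneg_nonneg; lia.
nia.
Qed.

Close Scope Z_scope.

Lemma N_gasp_sqrt n : 1 < n -> N_gasp n n = n ^ 4 + 2 * n ^ 3 + 2 * n ^ 2 - n - 2.
Proof.
move=> n_gt1; rewrite (_ : 4 = 2 + 2) // (_ : 3 = 2 + 1) // !expnD expn1.
have m_sq : n ^ 2 = n * n by rewrite -mulnn.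
set m := n ^ 2 in m_sq *; have n_lt_m : n < m by nia.
have [n_gt0 m_gt1] : 0 < n /\ 1 < m by lia.
rewrite /N_gasp size_gasp_sumset ?(ltnW n_lt_m) //.
have -> : m.-1 = n.-1 * n + n.-1 by nia.
by rewrite S_nthE; lia.
Qed.

Lemma N_gasp_min n r : 1 < n -> 1 <= r <= n ^ 2 -> N_gasp n n <= N_gasp n r.
Proof.
move=> n_gt1 /andP[r_gt0 r_le_sq].
have n_lt_sq : n < n ^ 2 by rewrite -mulnn; nia.
have [n_gt0 sq_gt1] : 0 < n /\ 1 < n ^ 2 by lia.
rewrite /N_gasp !size_gasp_sumset ?(ltnW n_lt_sq) //.
have sq_pred : (n ^ 2).-1 = n.-1 * n + n.-1 by rewrite -mulnn; nia.
rewrite [in X in X <= _]sq_pred.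
rewrite S_nthE //; last by lia.
rewrite (ltn_eqF n_lt_sq) /S_nth.
have := @gasp_cost_minZ (Z.of_nat n) (Z.of_nat r)
  (Z.of_nat ((n ^ 2).-1 %/ r)) (Z.of_nat ((n ^ 2).-1 %% r)).
have := divn_eq (n ^ 2).-1 r; have := ltn_pmod (n ^ 2).-1 r_gt0.
lia.
Qed.

Theorem proposition1 (n : nat) (hn : 1 <= n) :
  (1 <= n <= n ^ 2) /\
  (forall r : nat, 1 <= r <= n ^ 2 -> N_gasp n n <= N_gasp n r) /\
  N_gasp n n = (if n == 1 then 3 else n ^ 4 + 2 * n ^ 3 + 2 * n ^ 2 - n - 2).
Proof.
have [n_le1 | n_gt1] := leqP n 1.
  have -> : n = 1 by lia.
  by split=> //; split=> [r r_range | ]; [have -> : r = 1 by lia | vm_compute].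
split; first by rewrite -mulnn leq_pmulr ?hn.
split; first by move=> r; apply: N_gasp_min.
by rewrite (gtn_eqF n_gt1) N_gasp_sqrt.
Qed.
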